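(* Let $0\le k,\ell<p+1$, $0\le r<p^2-1$ and $\lambda\in\overline{\mathbb{F}}_p^\times$. Then $\varphi_{k,\ell}$ is equivalent to $\psi_{r,\lambda}$ (conjugate by an element of $\mathrm{GL}_2(\overline{\mathbb{F}}_p)$) if and only if $k=\ell$, $r\equiv(1-p)k\pmod{p^2-1}$ and $\lambda=-1$.
   Context: $p$ odd prime; $\mathcal{G}_F=\mathrm{Gal}(\overline{\mathbb{Q}}_p/F)$, $\mathbb{Q}_{p^2}$ unramified quadratic; $\mathrm{Fr}_p\in\mathcal{G}_{\mathbb{Q}_p}$ a fixed geometric Frobenius lift. $\omega_2$: character of $\mathcal{G}_{\mathbb{Q}_{p^2}}$, on inertia $h\mapsto$ reduction of $h(\sqrt[p^2-1]{p})/\sqrt[p^2-1]{p}$, with $\omega_2(\mathrm{Fr}_p^2)=1$; $\mu_{2,\lambda}$ unramified with $\mathrm{Fr}_p^2\mapsto\lambda$. ${}^LG=\mathrm{GL}_2(\overline{\mathbb{F}}_p)\rtimes\mathcal{G}_{\mathbb{Q}_p}$ with $\mathcal{G}_{\mathbb{Q}_{p^2}}$ acting trivially and $\mathrm{Fr}_pg\mathrm{Fr}_p^{-1}=\Phi_2(g^\top)^{-1}\Phi_2^{-1}$, $\Phi_2=\begin{pmatrix}0&1\\-1&0\end{pmatrix}$. $\varphi_{k,\ell}$: $\mathrm{Fr}_p\mapsto\begin{pmatrix}0&-1\\1&0\end{pmatrix}\mathrm{Fr}_p$, $h\mapsto\mathrm{diag}\big(\mu_{2,-1}\omega_2^{(1-p)k}(h),\mu_{2,-1}\omega_2^{(1-p)\ell}(h)\big)h$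 ($h\in\mathcal{G}_{\mathbb{Q}_{p^2}}$). $\psi_{r,\lambda}$: $\mathrm{Fr}_p\mapsto\mathrm{diag}(1,\lambda)\mathrm{Fr}_p$, $h\mapsto\mathrm{diag}\big(\mu_{2,\lambda^{-1}}\omega_2^{r}(h),\mu_{2,\lambda}\omega_2^{-pr}(h)\big)h$. *)

From HB Require Import structures.
From mathcomp Require Import all_boot all_order all_algebra.
From mathcomp Require Import monoid.
Set Implicit Arguments. Unset Strict Implicit. Unset Printing Implicit Defensive.
Import Order.TTheory GRing.Theory Num.Theory.
Local Open Scope ring_scope.

(* The L-group  ^L G = GL_2(F) x| G_{Q_p}.  A parameter G_{Q_p} -> ^L G of
   the shape considered in the paper is given by
     - its values  h |-> A(h) . h   on  h in G_{Q_{p^2}}  (onH), and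
     - its value   Fr_p |-> M . Fr_p                    (atFr).
   Since G_{Q_p} = G_{Q_{p^2}} |_| G_{Q_{p^2}} Fr_p, these data determine it. *)
Record Lparam (F : fieldType) (H : Type) := mkLparam {
  onH : H -> 'M[F]_2 ;
  atFr : 'M[F]_2 }.

Definition Phi2 {F : fieldType} : 'M[F]_2 :=
  \matrix_(i < 2, j < 2)
    (if (val i == 0%N) && (val j == 1%N) then 1
     else if (val i == 1%N) && (val j == 0%N) then -1 else 0).

(* the action of Fr_p on GL_2 :  Fr_p g Fr_p^{-1} = Phi_2 (g^T)^{-1} Phi_2^{-1} *)
Definition frob_act {F : fieldType} (g : 'M[F]_2) : 'M[F]_2 :=
  Phi2 *m invmx (g^T) *m invmx Phi2.

(* Conjugation by g in GL_2(F) inside ^L G: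
     g (A h) g^{-1}   = (g A g^{-1}) h               (h acts trivially)
     g (M Fr) g^{-1}  = (g M (Fr g^{-1} Fr^{-1})) Fr.
   Two parameters are equivalent iff some g in GL_2(F) conjugates one to the
   other; agreement on G_{Q_{p^2}} and on Fr_p is agreement on all of
   G_{Q_p}, as conjugation is a group automorphism of ^L G. *)
Definition Lequiv (F : fieldType) (H : Type) (phi psi : Lparam F H) : Prop :=
  exists g : 'M[F]_2, g \in unitmx /\
    (forall h, g *m onH phi h *m invmx g = onH psi h) /\
    g *m atFr phi *m frob_act (invmx g) = atFr psi.

Definition diag2 {F : fieldType} (a b : F) : 'M[F]_2 :=
  \matrix_(i < 2, j < 2) (if i == j then (if val i == 0%N then a else b) else 0).

Definition J2 {F : fieldType} : 'M[F]_2 :=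
  \matrix_(i < 2, j < 2)
    (if (val i == 0%N) && (val j == 1%N) then -1
     else if (val i == 1%N) && (val j == 0%N) then 1 else 0).

Definition is_character (F : fieldType) (G : groupType) (chi : G -> F) : Prop :=
  chi 1%g = 1 /\ forall x y : G, chi (x * y)%g = chi x * chi y.

Definition phi_kl (F : fieldType) (G : groupType) (p : nat)
    (om2 : G -> F) (mu2 : F -> G -> F) (k l : nat) : Lparam F G :=
  mkLparam (fun h => diag2 (mu2 (-1) h * om2 h ^ ((1 - (p%:Z)) * k%:Z)%R)
                           (mu2 (-1) h * om2 h ^ ((1 - (p%:Z)) * l%:Z)%R))
           J2.

Definition psi_rl (F : fieldType) (G : groupType) (p : nat)
    (om2 : G -> F) (mu2 : F -> G -> F) (r : nat) (lam : F) : Lparam F G :=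
  mkLparam (fun h => diag2 (mu2 lam^-1 h * om2 h ^ (r%:Z))
                           (mu2 lam h * om2 h ^ (- ((p * r)%N%:Z))%R))
           (diag2 1 lam).

From HB Require Import structures.
From mathcomp Require Import all_boot all_order all_algebra.
From mathcomp Require Import ring zify.
From mathcomp Require Import cyclic separable cyclotomic.
(* Conjugating [M Fr_p] by [g] gives [g M det(g) g^-1 Fr_p], because the twisted action
   of Fr_p on [g^-1] is the adjugate of [g]; the trace of the matrix part is thus
   multiplied by [det g], and [tr J2 = 0] forces [1 + lambda = 0].  On an inertia
   element on which [omega_2] is a primitive [(p^2-1)]-th root of unity the
   diagonal matrices must agree up to a swap of entries, giving
   [(1-p)k = r] and [(1-p)l = -pr] mod [p^2-1] (or the swapped pair).  Multiplying
   the first by [-p] and using [p^2 = 1] yields [(1-p)k = (1-p)l] mod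
   [(p-1)(p+1)], hence [k = l] as [0 <= k, l <= p].  Conversely, for [k = l] the
   inertia part is scalar, and [J2] is diagonalised with eigenvalues [i, -i] by a
   matrix of determinant [i], which conjugates [J2 Fr_p] to [diag(1,-1) Fr_p]. *)

Set Implicit Arguments.
Unset Strict Implicit.
Unset Printing Implicit Defensive.

Import Order.TTheory GRing.Theory Num.Theory.
Local Open Scope ring_scope.

Lemma ord2P (i : 'I_2) : i = 0 \/ i = 1.
Proof. by case: i => [[|[|i]] Hi] //; [left | right]; apply: val_inj. Qed.

Lemma big_ord2 (R : nmodType) (f : 'I_2 -> R) : \sum_(i < 2) f i = f 0 + f 1.
Proof. by rewrite big_ord_recl big_ord1; congr (_ + f _); apply: val_inj. Qed.

Section TwoByTwo.
Variable F : fieldType.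
Implicit Types A B g : 'M[F]_2.

Lemma mx2P A B : A 0 0 = B 0 0 -> A 0 1 = B 0 1 ->
  A 1 0 = B 1 0 -> A 1 1 = B 1 1 -> A = B.
Proof.
move=> e00 e01 e10 e11; apply/matrixP => i j.
by case: (ord2P i) => ->; case: (ord2P j) => ->.
Qed.

Lemma mul2E A B i j : (A *m B) i j = A i 0 * B 0 j + A i 1 * B 1 j.
Proof. by rewrite mxE big_ord2. Qed.

Lemma mxtrace2 A : \tr A = A 0 0 + A 1 1.
Proof. exact: big_ord2. Qed.

Lemma det2 A : \det A = A 0 0 * A 1 1 - A 0 1 * A 1 0.
Proof.
rewrite (expand_det_row _ 0) big_ord2 /cofactor !det_mx11 !mxE /=.
have -> : lift 0 0 = 1 :> 'I_2 by apply: val_inj.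
have -> : lift 1 0 = 0 :> 'I_2 by apply: val_inj.
by rewrite expr0 expr1 mul1r mulN1r mulrN.
Qed.

Lemma invmx_Phi2 : invmx (@Phi2 F) = J2.
Proof.
have PJ : Phi2 *m J2 = 1%:M :> 'M[F]_2 by apply: mx2P; rewrite mul2E !mxE /=; ring.
by rewrite -[RHS](mulKmx (mulmx1_unit PJ).1) PJ mulmx1.
Qed.

Lemma frob_act_invmx g : g \in unitmx -> frob_act (invmx g) = \det g *: invmx g.
Proof.
move=> Ug; rewrite /frob_act -trmx_inv invmxK invmx_Phi2.
have adj : Phi2 *m g^T *m J2 *m g = (\det g)%:M.
  by rewrite det2; apply: mx2P; rewrite !mul2E !mxE /=; ring.
by rewrite -mul_scalar_mx -adj mulmxK.
Qed.

Lemma mxtrace_J2 : \tr (@J2 F) = 0.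
Proof. by rewrite mxtrace2 !mxE /= addr0. Qed.

Lemma mxtrace_diag2 (a b : F) : \tr (diag2 a b) = a + b.
Proof. by rewrite mxtrace2 !mxE. Qed.

Lemma mxtrace_frob_conj g M : g \in unitmx ->
  \tr (g *m M *m frob_act (invmx g)) = \det g * \tr M.
Proof.
by move=> Ug; rewrite frob_act_invmx // -scalemxAr mxtraceZ mxtrace_mulC mulKmx.
Qed.

Lemma frob_conj_J2_diag2 g (lam : F) : g \in unitmx ->
  g *m J2 *m frob_act (invmx g) = diag2 1 lam -> lam = -1.
Proof.
move=> Ug /(congr1 mxtrace); rewrite mxtrace_frob_conj // mxtrace_J2 mxtrace_diag2.
by rewrite mulr0 => /esym/eqP; rewrite addrC addr_eq0 => /eqP.
Qed.

Lemma conj_scalar_diag2 g (a : F) : g \in unitmx ->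
  g *m diag2 a a *m invmx g = diag2 a a.
Proof.
move=> Ug; have -> : diag2 a a = a%:M by apply: mx2P; rewrite !mxE.
by rewrite scalar_mxC mulmxK.
Qed.

Lemma conj_diag2 g (a b c d : F) : g \in unitmx ->
  g *m diag2 a b *m invmx g = diag2 c d -> (a = c /\ b = d) \/ (a = d /\ b = c).
Proof.
move=> Ug e; have {}e : g *m diag2 a b = diag2 c d *m g by rewrite -e mulmxKV.
have E i j : (g *m diag2 a b) i j = (diag2 c d *m g) i j by rewrite e.
have e00 := E 0 0; have e01 := E 0 1; have e10 := E 1 0; have e11 := E 1 1.
rewrite !mul2E !mxE /= !mulr0 !mul0r !addr0 !add0r in e00 e01 e10 e11.
have [diag|antidiag] : g 0 0 * g 1 1 != 0 \/ g 0 1 * g 1 0 != 0.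
  move: Ug; rewrite unitmxE unitfE det2.
  by have [->|] := eqVneq (g 0 0 * g 1 1) 0; [rewrite sub0r oppr_eq0; right | left].
- move: diag; rewrite mulf_eq0 negb_or => /andP[g00 g11]; left.
  by split; [apply: (mulfI g00); rewrite e00 mulrC | apply: (mulfI g11); rewrite e11 mulrC].
- move: antidiag; rewrite mulf_eq0 negb_or => /andP[g01 g10]; right.
  by split; [apply: (mulfI g10); rewrite e10 mulrC | apply: (mulfI g01); rewrite e01 mulrC].
Qed.

Lemma frob_conj_J2 (i : F) : i ^+ 2 = -1 -> 2 != 0 :> F ->
  exists2 g : 'M[F]_2, g \in unitmx & g *m J2 *m frob_act (invmx g) = diag2 1 (-1).
Proof.
move=> i2 two0.
have i0 : i != 0 by apply: contra_eq_neq i2 => ->; rewrite expr0n eq_sym oppr_eq0 oner_eq0.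
(* The rows of [g] are left eigenvectors of [J2], scaled so that [det g = i]. *)
pose g : 'M[F]_2 := \matrix_(r < 2, c < 2)
  (if val r == 0%N then (if val c == 0%N then i else 1) else (if val c == 0%N then - i / 2 else 2^-1)).
have detg : \det g = i by rewrite det2 !mxE /=; field.
have Ug : g \in unitmx by rewrite unitmxE detg unitfE.
exists g => //; rewrite frob_act_invmx // detg -scalemxAr scalemxAl.
have -> : i *: (g *m J2) = diag2 1 (-1) *m g.
  by apply: mx2P; rewrite !mxE !big_ord2 !mxE /=; field: i2.
by rewrite mulmxK.
Qed.

End TwoByTwo.

Section RootsOfUnity.
Variables (F : fieldType) (z : F) (n : nat).
Hypothesis n_gt0 : (0 < n)%N.

Lemma expfz_modz (a : int) : z ^+ n = 1 -> z ^ a = z ^+ `|(a %% n%:Z)%Z|%N.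
Proof.
move=> zn; have : z ^+ n != 0 by rewrite zn oner_neq0.
rewrite expf_eq0 n_gt0 /= => z0.
rewrite exprnP gez0_abs ?modz_ge0 ?eqz_nat -?lt0n //.
by rewrite {1}(divz_eq a n%:Z) expfzDr // -exprz_exp exprzAC -exprnP zn exp1rz mul1r.
Qed.

Lemma expfz_eq_mod (a b : int) : z ^+ n = 1 ->
  (a = b %[mod n%:Z])%Z -> z ^ a = z ^ b.
Proof. by move=> zn eab; rewrite !expfz_modz // eab. Qed.

Lemma prim_expfz_inj (a b : int) : n.-primitive_root z ->
  z ^ a = z ^ b -> (a = b %[mod n%:Z])%Z.
Proof.
move=> zprim; have zn : z ^+ n = 1 by apply/eqP; rewrite -(prim_order_dvd zprim).
have mod_lt c : (`|(c %% n%:Z)%Z| < n)%N.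
  by rewrite -ltz_nat gez0_abs ?modz_ge0 ?ltz_pmod // ?eqz_nat -?lt0n.
rewrite !expfz_modz // => /eqP; rewrite (eq_prim_root_expr zprim) !modn_small //.
by move/eqP/(congr1 Posz); rewrite !gez0_abs ?modz_ge0 ?eqz_nat -?lt0n.
Qed.

End RootsOfUnity.

Lemma closed_prim_root_exists (F : closedFieldType) (n : nat) :
  (0 < n)%N -> n%:R != 0 :> F -> exists z : F, n.-primitive_root z.
Proof.
move=> n_gt0 nF.
have [rs Hrs] := closed_field_poly_normal ('X^n - 1 : {poly F}).
rewrite (monicP (monicXnsubC 1 n_gt0)) scale1r in Hrs.
have sep := separable_Xn_sub_1 nF.
rewrite -polyC1 Hrs separable_prod_XsubC in sep.
have sz : size rs = n.
  by have := size_XnsubC (1 : F) n_gt0; rewrite Hrs size_prod_XsubC => -[].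
have all_unity : all n.-unity_root rs.
  by apply/allP => x xr; rewrite /root_of_unity -polyC1 Hrs root_prod_XsubC.
have := has_prim_root n_gt0 all_unity sep; rewrite sz leqnn => /(_ isT) /hasP[z _ zprim].
by exists z.
Qed.

Lemma closed_sqrtN1 (F : closedFieldType) : exists i : F, i ^+ 2 = -1.
Proof.
have [i] : exists i : F, root ('X^2 + 1) i.
  by apply: closed_rootP; rewrite size_polyDl ?size_polyXn ?size_poly1.
by rewrite /root !hornerE addr_eq0 => /eqP; exists i.
Qed.

Lemma pchar_odd_two_neq0 (R : nzRingType) (p : nat) :
  p \in [pchar R] -> odd p -> 2 != 0 :> R.
Proof.
move=> pcharR; apply: contraTneq => two0.
have p_gt1 := prime_gt1 (pcharf_prime pcharR).
have : (p %| 2)%N by rewrite (dvdn_pcharf pcharR) two0.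
by move/dvdn_leq => /(_ isT) p_le2; have -> : p = 2%N by lia.
Qed.

Section ExponentsModP2Sub1.
Variable p : nat.
Hypothesis p_gt1 : (1 < p)%N.
Local Notation n := (p ^ 2 - 1)%N%:Z.

Lemma Posz_expn2_sub1 : n = p%:Z * p%:Z - 1.
Proof. by rewrite -subzn ?expn_gt0 ?(ltnW p_gt1) // expnS expn1 PoszM. Qed.

Lemma mulNp_mul1Bp_mod (x : int) :
  (- p%:Z * ((1 - p%:Z) * x) = (1 - p%:Z) * x %[mod n])%Z.
Proof.
apply/eqP; rewrite eqz_mod_dvd; apply/dvdzP; exists x.
rewrite Posz_expn2_sub1; ring.
Qed.

Lemma mul1Bp_mod_inj (k l : nat) : (k <= p)%N -> (l <= p)%N ->
  ((1 - p%:Z) * k%:Z = (1 - p%:Z) * l%:Z %[mod n])%Z -> k = l.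
Proof.
move=> kp lp /eqP; rewrite eqz_mod_dvd => /dvdzP[q e].
have p1_neq0 : p%:Z - 1 != 0 by rewrite subr_eq0 eqz_nat gtn_eqF.
have {}e : l%:Z - k%:Z = q * (p%:Z + 1).
  apply: (mulfI p1_neq0); transitivity ((1 - p%:Z) * k%:Z - (1 - p%:Z) * l%:Z); first ring.
  by rewrite e Posz_expn2_sub1; ring.
by have [q_lt0|q_gt0|q0] := ltgtP q 0; nia.
Qed.

Lemma exponent_congr_eq (k l r : nat) : (k <= p)%N -> (l <= p)%N ->
  ((1 - p%:Z) * k%:Z = r%:Z %[mod n])%Z ->
  ((1 - p%:Z) * l%:Z = - (p * r)%N%:Z %[mod n])%Z -> k = l.
Proof.
move=> kp lp ekr elr; apply: mul1Bp_mod_inj => //.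
by rewrite elr -mulNp_mul1Bp_mod -modzMmr ekr modzMmr PoszM mulNr.
Qed.

Lemma exponent_congr_mulNp (k r : nat) :
  (r%:Z = (1 - p%:Z) * k%:Z %[mod n])%Z ->
  (- (p * r)%N%:Z = (1 - p%:Z) * k%:Z %[mod n])%Z.
Proof. by move=> erk; rewrite PoszM -mulNr -modzMmr erk modzMmr mulNp_mul1Bp_mod. Qed.

End ExponentsModP2Sub1.

Theorem lemma6p23
  (p : nat) (Hp : prime p) (Hodd : odd p)
  (F : closedFieldType) (HcharF : p \in [pchar F])
  (Halg : forall x : F, x != 0 -> exists n : nat, (0 < n)%N /\ x ^+ n = 1)
  (G : groupType) (Inert : pred G) (frob2 : G)
  (om2 : G -> F) (mu2 : F -> G -> F)
  (Hom2_char : is_character om2)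
  (Hom2_frob : om2 frob2 = 1)
  (Hom2_val : forall h : G, om2 h ^+ (p ^ 2 - 1) = 1)
  (Hom2_inert : forall z : F, z ^+ (p ^ 2 - 1) = 1 ->
                  exists t : G, t \in Inert /\ om2 t = z)
  (Hmu_char : forall lam : F, lam != 0 -> is_character (mu2 lam))
  (Hmu_unr : forall lam : F, lam != 0 -> forall t : G, t \in Inert -> mu2 lam t = 1)
  (Hmu_frob : forall lam : F, lam != 0 -> mu2 lam frob2 = lam)
  (k l r : nat) (lam : F)
  (Hk : (k < p.+1)%N) (Hl : (l < p.+1)%N) (Hr : (r < p ^ 2 - 1)%N)
  (Hlam : lam != 0) :
  Lequiv (phi_kl p om2 mu2 k l) (psi_rl p om2 mu2 r lam) <->
  [/\ k = l,
      (r%:Z = (1 - p%:Z) * k%:Z %[mod (p ^ 2 - 1)%N%:Z])%Z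
    & lam = -1].
Proof.
have p_gt1 := prime_gt1 Hp.
have n_gt0 : (0 < p ^ 2 - 1)%N by rewrite subn_gt0 -{1}(expn0 p) ltn_exp2l.
split.
- move=> [g [Ug [conj_inert conj_frob]]].
  have lam_eq := frob_conj_J2_diag2 Ug conj_frob.
  have n_neq0 : (p ^ 2 - 1)%:R != 0 :> F.
    by rewrite natrB ?expn_gt0 ?(ltnW p_gt1) // natrX (pcharf0 HcharF) expr0n sub0r oppr_eq0 oner_eq0.
  have [z zprim] := closed_prim_root_exists n_gt0 n_neq0.
  have [t [tI om2t]] := Hom2_inert z (prim_expr_order zprim).
  have := conj_diag2 Ug (conj_inert t).
  rewrite /= !Hmu_unr ?invr_eq0 ?oppr_eq0 ?oner_eq0 // !mul1r om2t.
  case=> -[/(prim_expfz_inj n_gt0 zprim) ekr /(prim_expfz_inj n_gt0 zprim) elr].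
  + by split; [apply: exponent_congr_eq ekr elr | rewrite ekr |].
  + have lk := exponent_congr_eq p_gt1 Hl Hk elr ekr.
    by split; [rewrite lk | rewrite -lk elr |].
- move=> [<- erk ->].
  have [i i2] := closed_sqrtN1 F.
  have [g Ug conj_frob] := frob_conj_J2 i2 (pchar_odd_two_neq0 HcharF Hodd).
  exists g; split=> //; split=> //= h.
  rewrite conj_scalar_diag2 // invrN1 (expfz_eq_mod n_gt0 (Hom2_val h) erk).
  by rewrite (expfz_eq_mod n_gt0 (Hom2_val h) (exponent_congr_mulNp p_gt1 erk)).
Qed.
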